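(* Let $\Pi$ be the topological prismatoid \#2669 of Criado and Santos: a polyhedral $4$-sphere on the $14$ vertices $0,1,2,3,4,5,6,a,b,c,d,e,f,g$ whose simplicial facets are exactly the following $4$-simplices (each string lists the five vertices of a facet): 0234a, 023ad, 123ae, 123cd, 13acd, 14abd, 14acd, 234ae, 23abf, 23acd, 24abf, 4abcd, 0123d, 0126d, 0134e, 013ad, 013ae, 0145f, 014be, 014bf, 0156g, 015ad, 015ae, 015be, 015bf, 015cd, 015cg, 016cd, 016cg, 0245f, 024af, 0256g, 025bf, 025bg, 026ad, 026af, 026bf, 026bg, 034ae, 04abe, 04abf, 05acd, 05ace, 05bce, 05bcg, 06abe, 06abf, 06acd, 06ace, 06bce, 06bcg, 1234e, 123ag, 123cg, 1245f, 124ae, 124ag, 124bf, 124bg, 1256g, 125bf, 125bg, 126cd, 126cg, 13acg, 14abe, 14acg, 14bcd, 14bcg, 15abd, 15abe, 15bcd, 15bcg, 23abg, 23acf, 23bcf, 23bcg, 24abg, 26acd, 26acf, 26bcf, 26bcg, 3abfg, 3acfg, 3bcfg, 4abcg, 5abde, 5acde, 5bcde, 6abef, 6acef, 6bcef, and which in addition has exactly two non-simplicial facets, its two bases, with vertex sets $\{0,1,\dots,6\}$ and $\{a,b,\dots,g\}$. Then $\Pi$ is not realizable: there is no convex $5$-polytope whose boundary complex is combinatorially isomorphic to $\Pi$.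
   Context: A topological prismatoid (Criado–Santos) is a combinatorial abstraction of a geometric prismatoid, i.e. of a polytope all of whose vertices lie in two parallel facets (the bases); all other facets are here simplices. *)

From mathcomp Require Import all_boot all_order all_algebra.
From mathcomp Require Import reals.
Set Implicit Arguments. Unset Strict Implicit. Unset Printing Implicit Defensive.
Import Order.TTheory GRing.Theory Num.Theory.
Local Open Scope ring_scope.

(* Vertex labels: 0..6 are the vertices 0..6, and 7..13 are a..g. *)
Definition Pi_simplicial_raw : seq (seq nat) :=
  [:: [:: 0; 2; 3; 4; 7];
  [:: 0; 2; 3; 7; 10];
  [:: 1; 2; 3; 7; 11];
  [:: 1; 2; 3; 9; 10];
  [:: 1; 3; 7; 9; 10];
  [:: 1; 4; 7; 8; 10];
  [:: 1; 4; 7; 9; 10];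
  [:: 2; 3; 4; 7; 11];
  [:: 2; 3; 7; 8; 12];
  [:: 2; 3; 7; 9; 10];
  [:: 2; 4; 7; 8; 12];
  [:: 4; 7; 8; 9; 10];
  [:: 0; 1; 2; 3; 10];
  [:: 0; 1; 2; 6; 10];
  [:: 0; 1; 3; 4; 11];
  [:: 0; 1; 3; 7; 10];
  [:: 0; 1; 3; 7; 11];
  [:: 0; 1; 4; 5; 12];
  [:: 0; 1; 4; 8; 11];
  [:: 0; 1; 4; 8; 12];
  [:: 0; 1; 5; 6; 13];
  [:: 0; 1; 5; 7; 10];
  [:: 0; 1; 5; 7; 11];
  [:: 0; 1; 5; 8; 11];
  [:: 0; 1; 5; 8; 12];
  [:: 0; 1; 5; 9; 10];
  [:: 0; 1; 5; 9; 13];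
  [:: 0; 1; 6; 9; 10];
  [:: 0; 1; 6; 9; 13];
  [:: 0; 2; 4; 5; 12];
  [:: 0; 2; 4; 7; 12];
  [:: 0; 2; 5; 6; 13];
  [:: 0; 2; 5; 8; 12];
  [:: 0; 2; 5; 8; 13];
  [:: 0; 2; 6; 7; 10];
  [:: 0; 2; 6; 7; 12];
  [:: 0; 2; 6; 8; 12];
  [:: 0; 2; 6; 8; 13];
  [:: 0; 3; 4; 7; 11];
  [:: 0; 4; 7; 8; 11];
  [:: 0; 4; 7; 8; 12];
  [:: 0; 5; 7; 9; 10];
  [:: 0; 5; 7; 9; 11];
  [:: 0; 5; 8; 9; 11];
  [:: 0; 5; 8; 9; 13];
  [:: 0; 6; 7; 8; 11];
  [:: 0; 6; 7; 8; 12];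
  [:: 0; 6; 7; 9; 10];
  [:: 0; 6; 7; 9; 11];
  [:: 0; 6; 8; 9; 11];
  [:: 0; 6; 8; 9; 13];
  [:: 1; 2; 3; 4; 11];
  [:: 1; 2; 3; 7; 13];
  [:: 1; 2; 3; 9; 13];
  [:: 1; 2; 4; 5; 12];
  [:: 1; 2; 4; 7; 11];
  [:: 1; 2; 4; 7; 13];
  [:: 1; 2; 4; 8; 12];
  [:: 1; 2; 4; 8; 13];
  [:: 1; 2; 5; 6; 13];
  [:: 1; 2; 5; 8; 12];
  [:: 1; 2; 5; 8; 13];
  [:: 1; 2; 6; 9; 10];
  [:: 1; 2; 6; 9; 13];
  [:: 1; 3; 7; 9; 13];
  [:: 1; 4; 7; 8; 11];
  [:: 1; 4; 7; 9; 13];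
  [:: 1; 4; 8; 9; 10];
  [:: 1; 4; 8; 9; 13];
  [:: 1; 5; 7; 8; 10];
  [:: 1; 5; 7; 8; 11];
  [:: 1; 5; 8; 9; 10];
  [:: 1; 5; 8; 9; 13];
  [:: 2; 3; 7; 8; 13];
  [:: 2; 3; 7; 9; 12];
  [:: 2; 3; 8; 9; 12];
  [:: 2; 3; 8; 9; 13];
  [:: 2; 4; 7; 8; 13];
  [:: 2; 6; 7; 9; 10];
  [:: 2; 6; 7; 9; 12];
  [:: 2; 6; 8; 9; 12];
  [:: 2; 6; 8; 9; 13];
  [:: 3; 7; 8; 12; 13];
  [:: 3; 7; 9; 12; 13];
  [:: 3; 8; 9; 12; 13];
  [:: 4; 7; 8; 9; 13];
  [:: 5; 7; 8; 10; 11];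
  [:: 5; 7; 9; 10; 11];
  [:: 5; 8; 9; 10; 11];
  [:: 6; 7; 8; 11; 12];
  [:: 6; 7; 9; 11; 12];
  [:: 6; 8; 9; 11; 12]].

Definition lbl_set (s : seq nat) : {set 'I_14} := [set i : 'I_14 | nat_of_ord i \in s].

Definition Pi_facets : seq {set 'I_14} :=
  map lbl_set Pi_simplicial_raw ++
  [:: lbl_set (iota 0 7); lbl_set (iota 7 7)].

Definition dot5 (R : realType) (w x : 'rV[R]_5) : R := \sum_(k < 5) w 0 k * x 0 k.

(* S is the vertex-index set of a face of conv(p i) : some (possibly trivial)
   valid linear inequality <w,x> <= c is tight exactly at the p i with i in S. *)
Definition is_face (R : realType) (p : 'I_14 -> 'rV[R]_5) (S : {set 'I_14}) : Prop :=
  exists (w : 'rV[R]_5) (c : R),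
    forall i, dot5 w (p i) <= c /\ (dot5 w (p i) == c) = (i \in S).

Definition is_facet (R : realType) (p : 'I_14 -> 'rV[R]_5) (S : {set 'I_14}) : Prop :=
  [/\ is_face p S, S != setT &
       forall T, is_face p T -> T != setT -> S \subset T -> T = S].

(* The points p i affinely span R^5, i.e. conv(p) is a 5-polytope. *)
Definition full_dim (R : realType) (p : 'I_14 -> 'rV[R]_5) : Prop :=
  forall (w : 'rV[R]_5) (c : R), (forall i, dot5 w (p i) = c) -> w = 0.

(* Since the face
   lattice of a polytope is determined by its vertex-facet incidences, this is
   a combinatorial isomorphism of the boundary complex with Pi. *)
Definition realizes_Pi (R : realType) (p : 'I_14 -> 'rV[R]_5) : Prop :=
  [/\ full_dim p,
       (forall i, is_face p [set i]) &
       (forall S, is_facet p S <-> S \in Pi_facets)].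

From mathcomp Require Import all_boot all_order all_algebra.
From mathcomp Require Import reals.
From mathcomp Require Import ring lra.
Set Implicit Arguments. Unset Strict Implicit. Unset Printing Implicit Defensive.
Import Order.TTheory GRing.Theory Num.Theory.
Local Open Scope ring_scope.

(** In homogeneous coordinates a realization assigns to every list of six
  vertices a bracket, the 6x6 determinant of their points.  A facet
  hyperplane vanishes on the facet and is negative on all other vertices, so
  Cramer's rule for seven points, five of them on a facet, leaves two terms and
  relates the signs of two brackets.  One bracket is nonzero because its six
  points can be cut off one at a time by facet hyperplanes; ten such exchanges
  then fix the signs in a three-term Grassmann-Pluecker relation, and with
  these signs all three of its terms are positive. *)

Definition drop_nth (k : nat) (l : seq nat) : seq nat := take k l ++ drop k.+1 l.

Lemma nth_drop_nth k l i : nth 0 (drop_nth k l) i = nth 0 l (bump k i).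
Proof.
rewrite /drop_nth /bump.
have [lt_k_l | le_l_k] := ltnP k (size l).
  rewrite nth_cat size_take lt_k_l.
  have [lt_ik | le_ki] := ltnP i k; first by rewrite nth_take.
  by rewrite nth_drop add1n addSn subnKC.
rewrite take_oversize ?drop_oversize ?cats0 //; last exact: leqW.
have [le_ki | //] := leqP k i.
have le_l_i := leq_trans le_l_k le_ki.
by rewrite !nth_default // leqW.
Qed.

Section Brackets.

Variables (R : fieldType) (n : nat) (x : nat -> 'rV[R]_n).

Definition bracket (l : seq nat) : R := \det (\matrix_(i < n) x (nth 0 l i)).

Lemma cramer_rule (l : seq nat) (c : 'cV[R]_n) :
  \sum_(k < n.+1) (-1) ^+ k * bracket (drop_nth k l) * (x (nth 0 l k) *m c) 0 0 = 0.
Proof.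
pose A := \matrix_(i < n.+1) x (nth 0 l i).
pose M : 'M_(n.+1) := row_mx (A *m c) A.
(* The first column of [M] is a combination of the others. *)
have detM0 : \det M = 0.
  have v_neq0 : row_mx (- 1%:M) c^T != 0 :> 'rV[R]_(1 + n).
    by rewrite row_mx_eq0 oppr_eq0 oner_eq0.
  apply/eqP; rewrite -det_tr; apply/det0P; exists (row_mx (- 1%:M) c^T) => //.
  rewrite -[row_mx _ _]trmxK -trmx_mul tr_row_mx trmxK raddfN /= tr_scalar_mx.
  by rewrite (mul_row_col (A *m c) A) mulmxN mulmx1 addNr trmx0.
rewrite -[RHS]detM0 (expand_det_col M 0); apply: eq_bigr => k _.
have -> : M k 0 = (x (nth 0 l k) *m c) 0 0.
  have -> : (0 : 'I_n.+1) = lshift n (0 : 'I_1) by apply: val_inj.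
  by rewrite (@row_mxEl _ _ 1 n) -(rowK (fun i => x (nth 0 l i)) k) -row_mul [RHS]mxE.
have bracket_minor : row' k (col' 0 M) = \matrix_(i < n) x (nth 0 (drop_nth k l) i).
  apply/matrixP => i j; rewrite !mxE.
  have -> : lift 0 j = rshift 1 j by apply: val_inj.
  by rewrite (unsplitK (inr j)) mxE nth_drop_nth.
by rewrite /cofactor bracket_minor addn0 mulrC mulrA.
Qed.

Lemma bracket_set_nth_linear (l : seq nat) (m : nat) : (m < n)%N ->
  exists c : 'cV[R]_n, forall k, bracket (set_nth 0 l m k) = (x k *m c) 0 0.
Proof.
move=> lt_m_n; pose m' := Ordinal lt_m_n.
pose B k := \matrix_(i < n) x (nth 0 (set_nth 0 l m k) i).
exists (\col_j cofactor (B 0) m' j) => k.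
have minor j : row' m' (col' j (B k)) = row' m' (col' j (B 0)).
  apply/matrixP => i j'; rewrite !mxE !nth_set_nth /=.
  by rewrite [_ == m]eq_sym (negbTE (neq_bump m i)).
rewrite /bracket -/(B k) (expand_det_row _ m') mxE; apply: eq_bigr => j _.
by rewrite !mxE /cofactor minor nth_set_nth /= eqxx.
Qed.

Lemma bracket_nonuniq (l : seq nat) : size l = n -> ~~ uniq l -> bracket l = 0.
Proof.
move=> size_l /(uniqPn 0)[i [j [lt_ij lt_j_l eq_ij]]].
have lt_i_n : (i < n)%N by rewrite -size_l (ltn_trans lt_ij).
rewrite size_l in lt_j_l.
apply: (determinant_alternate (i1 := Ordinal lt_i_n) (i2 := Ordinal lt_j_l)).
  by rewrite -val_eqE /= ltn_eqF.
by move=> k; rewrite !mxE /= eq_ij.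
Qed.

Lemma grassmann_pluecker (l Y : seq nat) : size Y = n.-1 -> (0 < n)%N ->
  \sum_(k < n.+1 | nth 0 l k \notin Y)
    (-1) ^+ k * bracket (drop_nth k l) * bracket (rcons Y (nth 0 l k)) = 0.
Proof.
move=> size_Y n_gt0.
have lt_pred_n : (n.-1 < n)%N by rewrite ltn_predL.
have [c linY] := bracket_set_nth_linear Y lt_pred_n.
have rcons_set_nth y : rcons Y y = set_nth 0 Y n.-1 y.
  by rewrite set_nthE -size_Y ltnn subnn cats1.
rewrite -[RHS](cramer_rule l c) big_mkcond; apply: eq_bigr => k _.
rewrite -linY -rcons_set_nth; case: ifPn => // /negPn y_in.
rewrite [bracket (rcons _ _)]bracket_nonuniq ?mulr0 //.
  by rewrite size_rcons size_Y prednK.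
by rewrite rcons_uniq y_in.
Qed.

Lemma bracket_neq0 (l : seq nat) (p : 'I_n) :
  (forall r : 'I_n, exists c : 'cV[R]_n, (x (nth 0 l r) *m c) 0 0 != 0 /\
     forall s : 'I_n, s != r -> s != p -> (x (nth 0 l s) *m c) 0 0 = 0) ->
  bracket l != 0.
Proof.
move=> separated; apply/negP => /det0P[v v_neq0 vA0].
have relation (c : 'cV[R]_n) : \sum_s v 0 s * (x (nth 0 l s) *m c) 0 0 = 0.
  transitivity ((v *m \matrix_(i < n) x (nth 0 l i) *m c) 0 0).
    rewrite -mulmxA mxE; apply: eq_bigr => s _.
    by rewrite -(rowK (fun i => x (nth 0 l i)) s) -row_mul mxE.
  by rewrite vA0 mul0mx mxE.
have coord0 r : (r != p -> v 0 p = 0) -> v 0 r = 0.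
  move=> vp0; have [c [cr_neq0 c0]] := separated r.
  have := relation c; rewrite (bigD1 r) //= big1 ?addr0 => [/eqP | s sr].
    by rewrite mulf_eq0 (negbTE cr_neq0) orbF => /eqP.
  have [sp | sp] := eqVneq s p; last by rewrite c0 ?mulr0.
  by rewrite sp vp0 ?mul0r // -sp eq_sym.
have vp0 : v 0 p = 0 by apply: coord0; rewrite eqxx.
by move/eqP: v_neq0; apply; apply/rowP => r; rewrite mxE; exact: coord0.
Qed.

End Brackets.

Lemma sgr_opp_of_addr_eq0 (R : realDomainType) (a b u v : R) :
  a * u + b * v = 0 -> 0 < u * v -> Num.sg a = - Num.sg b.
Proof.
move=> /eqP; rewrite addr_eq0 => /eqP eq_au uv_gt0.
have u_neq0 : u != 0 by apply: contraTneq uv_gt0 => ->; rewrite mul0r ltxx.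
have sg_uv : Num.sg u = Num.sg v.
  apply/eqP; move: (mulr_sg_eq1 u (Num.sg v)).
  by rewrite -sgrM gtr0_sg // eqxx => /esym/andP[].
apply: (mulIf (x := Num.sg u)); first by rewrite sgr_eq0.
by rewrite -sgrM eq_au sgrN sgrM sg_uv mulNr.
Qed.

Lemma sgr_mul_gt0 (R : realDomainType) (a b : R) :
  Num.sg a = Num.sg b -> b != 0 -> 0 < a * b.
Proof. by move=> sg_ab b_neq0; rewrite -sgr_gt0 sgrM sg_ab -expr2 sqr_sg b_neq0 ltr01. Qed.

Lemma sgr_mul_lt0 (R : realDomainType) (a b : R) :
  Num.sg a = - Num.sg b -> b != 0 -> a * b < 0.
Proof.
move=> sg_ab b_neq0.
by rewrite -sgr_lt0 sgrM sg_ab mulNr -expr2 sqr_sg b_neq0 oppr_lt0 ltr01.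
Qed.

Section SignedBrackets.

Variables (R : realFieldType) (n : nat) (x : nat -> 'rV[R]_n).

Lemma sgr_bracket_exchange (l : seq nat) (c : 'cV[R]_n) (i j : 'I_n.+1) :
  i != j ->
  (forall k : 'I_n.+1, k != i -> k != j -> (x (nth 0 l k) *m c) 0 0 = 0) ->
  0 < (x (nth 0 l i) *m c) 0 0 * (x (nth 0 l j) *m c) 0 0 ->
  Num.sg (bracket x (drop_nth i l)) =
    (-1) ^+ (i + j).+1 * Num.sg (bracket x (drop_nth j l)).
Proof.
move=> neq_ij c0 same_side.
have := cramer_rule x l c.
rewrite (bigD1 i) // (bigD1 j) 1?eq_sym //= big1 ?addr0; last first.
  by move=> k /andP[ki kj]; rewrite c0 ?mulr0.
move=> /sgr_opp_of_addr_eq0 /(_ same_side); rewrite !sgrM !sgrX sgrN1.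
move=> /(congr1 ( *%R ((-1) ^+ i))); rewrite signrMK => ->.
by rewrite exprS exprD; ring.
Qed.

End SignedBrackets.

Section Prismatoid2669.

Variables (R : realType) (p : 'I_14 -> 'rV[R]_5).
Hypothesis p_facets : forall S, is_facet p S <-> S \in Pi_facets.

Definition point (k : nat) : 'rV[R]_(5 + 1) := row_mx (p (inord k)) (const_mx 1).

Definition chi (l : seq nat) : R := Num.sg (bracket point l).

Definition Pi_facet_lists : seq (seq nat) := Pi_simplicial_raw ++ [:: iota 0 7; iota 7 7].

Lemma lbl_set_Pi_facet F : F \in Pi_facet_lists -> lbl_set F \in Pi_facets.
Proof.
move=> F_facet; rewrite /Pi_facets.
by rewrite -[[:: _; _]]/(map lbl_set [:: iota 0 7; iota 7 7]) -map_cat map_f.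
Qed.

Lemma facet_form F : F \in Pi_facet_lists ->
  exists c : 'cV[R]_(5 + 1), forall k, (k < 14)%N ->
    (k \in F -> (point k *m c) 0 0 = 0) /\ (k \notin F -> (point k *m c) 0 0 < 0).
Proof.
move=> /lbl_set_Pi_facet /p_facets[[w [d face_wd]] _ _].
exists (col_mx w^T (const_mx (- d))) => k lt_k14.
have -> : (point k *m col_mx w^T (const_mx (- d))) 0 0 = dot5 w (p (inord k)) - d.
  rewrite mul_row_col !mxE big_ord1 !mxE mul1r /dot5; congr (_ + _).
  by apply: eq_bigr => j _; rewrite !mxE mulrC.
have [le_wd] := face_wd (inord k); rewrite inE inordK // => eq_wd.
split=> [inF | notinF]; first by apply/eqP; rewrite subr_eq0 eq_wd.
by rewrite subr_lt0 lt_neqAle eq_wd notinF.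
Qed.

Lemma nth_lt14 (l : seq nat) :
  all (fun k => (k < 14)%N) l -> forall k, (nth 0 l k < 14)%N.
Proof.
move=> /allP l_lt14 k.
by have [/(mem_nth 0)/l_lt14 | /(nth_default 0) ->] := ltnP k (size l).
Qed.

Definition off_facet (F l : seq nat) : seq nat :=
  [seq k <- iota 0 7 | nth 0 l k \notin F].

Definition exchange_at (F l : seq nat) (i j : nat) : bool :=
  [&& F \in Pi_facet_lists, all (fun k => (k < 14)%N) l
    & perm_eq (off_facet F l) [:: i; j]].

Lemma chi_exchange F l i j : exchange_at F l i j ->
  chi (drop_nth i l) = (-1) ^+ (i + j).+1 * chi (drop_nth j l).
Proof.
case/and3P=> /facet_form[c c_sign] /nth_lt14 l_lt14 off_ij.
have off k : (k \in [:: i; j]) = (k < 7)%N && (nth 0 l k \notin F).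
  by rewrite -(perm_mem off_ij) mem_filter mem_iota andbC.
have neq_ij : i != j.
  by have := perm_uniq off_ij; rewrite filter_uniq ?iota_uniq //= inE andbT => <-.
have /andP[lt_i7 i_out] : (i < 7)%N && (nth 0 l i \notin F) by rewrite -off mem_head.
have /andP[lt_j7 j_out] : (j < 7)%N && (nth 0 l j \notin F) by rewrite -off !inE eqxx orbT.
have := @sgr_bracket_exchange R (5 + 1) point l c (inord i) (inord j).
rewrite !inordK //; apply.
- by rewrite -(inj_eq val_inj) /= !inordK.
- move=> k; rewrite -!(inj_eq val_inj) /= !inordK // => ki kj.
  have : (k : nat) \notin [:: i; j] by rewrite !inE negb_or ki kj.
  by rewrite off ltn_ord /= negbK => /(c_sign _ (l_lt14 k)).1.
- by rewrite nmulr_rgt0 (c_sign _ (l_lt14 _)).2.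
Qed.

Lemma chi_exchange_eq F l i j (s : R) : exchange_at F l i j -> odd (i + j) ->
  chi (drop_nth j l) = s -> chi (drop_nth i l) = s.
Proof. by move=> /chi_exchange -> odd_ij ->; rewrite -signr_odd /= odd_ij expr0 mul1r. Qed.

Arguments chi_exchange_eq F l i j {s}.

Lemma chi_exchange_opp F l i j (s : R) : exchange_at F l i j -> ~~ odd (i + j) ->
  chi (drop_nth j l) = s -> chi (drop_nth i l) = - s.
Proof.
move=> /chi_exchange -> even_ij ->.
by rewrite -signr_odd /= (negbTE even_ij) expr1 mulN1r.
Qed.

Arguments chi_exchange_opp F l i j {s}.

Definition separating_facets (l : seq nat) (q : nat) (Fs : seq (seq nat)) : bool :=
  all (fun r => let F := nth [::] Fs r in
         [&& F \in Pi_facet_lists, nth 0 l r \notin F &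
             all (fun s => [|| s == r, s == q | nth 0 l s \in F]) (iota 0 6)])
      (iota 0 6).

Lemma chi_neq0 l q Fs : all (fun k => (k < 14)%N) l -> (q < 6)%N ->
  separating_facets l q Fs -> chi l != 0.
Proof.
move=> /nth_lt14 l_lt14 lt_q6 /allP separated; rewrite sgr_eq0.
apply: (@bracket_neq0 _ _ _ _ (Ordinal lt_q6)) => r.
have r_iota : (r : nat) \in iota 0 6 by rewrite mem_iota ltn_ord.
have /and3P[/facet_form[c c_sign] r_out /allP others] := separated r r_iota.
exists c; split; first by rewrite ltr0_neq0 // (c_sign _ (l_lt14 r)).2.
move=> s sr sq; apply: (c_sign _ (l_lt14 s)).1.
have := others s; rewrite mem_iota ltn_ord !val_eqE (negbTE sr).
by rewrite (negbTE (sq : (s : nat) != q)) => /(_ isT).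
Qed.

Lemma chi_root_neq0 : chi [:: 0; 5; 7; 8; 9; 11] != 0.
Proof.
by apply: (chi_neq0 (q := 2) (Fs := [:: [:: 5; 8; 9; 10; 11]; [:: 0; 6; 8; 9; 11];
  [:: 0; 5; 8; 9; 11]; [:: 0; 5; 7; 9; 11]; [:: 0; 1; 5; 8; 11]; [:: 0; 5; 8; 9; 13]])).
Qed.

Lemma pluecker_relation :
  bracket point [:: 5; 7; 8; 9; 11; 13] * bracket point [:: 0; 5; 7; 8; 9; 10]
  - bracket point [:: 5; 7; 8; 9; 10; 13] * bracket point [:: 0; 5; 7; 8; 9; 11]
  + bracket point [:: 5; 7; 8; 9; 10; 11] * bracket point [:: 0; 5; 7; 8; 9; 13] = 0.
Proof.
have := @grassmann_pluecker _ _ point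
  [:: 5; 7; 8; 9; 10; 11; 13] [:: 0; 5; 7; 8; 9] erefl isT.
rewrite big_mkcond !big_ord_recr big_ord0 /= /drop_nth /= => <-; ring.
Qed.

Lemma chi_signs (s := chi [:: 0; 5; 7; 8; 9; 11]) :
  [/\ chi [:: 5; 7; 8; 9; 11; 13] = - s, chi [:: 0; 5; 7; 8; 9; 10] = - s,
      chi [:: 5; 7; 8; 9; 10; 13] = - s, chi [:: 5; 7; 8; 9; 10; 11] = - s
    & chi [:: 0; 5; 7; 8; 9; 13] = - s].
Proof.
have e1 : chi [:: 0; 5; 7; 9; 10; 11] = - s :=
  chi_exchange_opp [:: 0; 5; 7; 9; 11] [:: 0; 5; 7; 8; 9; 10; 11] 3 5 isT isT erefl.
have e2 : chi [:: 5; 7; 8; 9; 10; 11] = - s :=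
  chi_exchange_eq [:: 5; 7; 9; 10; 11] [:: 0; 5; 7; 8; 9; 10; 11] 0 3 isT isT e1.
have e3 : chi [:: 4; 7; 8; 9; 10; 11] = - s :=
  chi_exchange_eq (iota 7 7) [:: 4; 5; 7; 8; 9; 10; 11] 1 0 isT isT e2.
have e4 : chi [:: 4; 7; 8; 9; 10; 13] = - s :=
  chi_exchange_eq [:: 4; 7; 8; 9; 10] [:: 4; 7; 8; 9; 10; 11; 13] 5 6 isT isT e3.
have e5 : chi [:: 4; 7; 8; 9; 11; 13] = - s :=
  chi_exchange_eq [:: 4; 7; 8; 9; 13] [:: 4; 7; 8; 9; 10; 11; 13] 4 5 isT isT e4.
have e6 : chi [:: 5; 7; 8; 9; 11; 13] = - s :=
  chi_exchange_eq (iota 7 7) [:: 4; 5; 7; 8; 9; 11; 13] 0 1 isT isT e5.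
have e7 : chi [:: 0; 5; 7; 8; 9; 10] = - s :=
  chi_exchange_eq [:: 0; 5; 7; 9; 10] [:: 0; 5; 7; 8; 9; 10; 11] 6 3 isT isT e1.
have e8 : chi [:: 5; 7; 8; 9; 10; 13] = - s :=
  chi_exchange_eq (iota 7 7) [:: 4; 5; 7; 8; 9; 10; 13] 0 1 isT isT e4.
have e9 : chi [:: 0; 5; 8; 9; 11; 13] = - s :=
  chi_exchange_opp [:: 0; 5; 8; 9; 11] [:: 0; 5; 7; 8; 9; 11; 13] 2 6 isT isT erefl.
have e10 : chi [:: 0; 5; 7; 8; 9; 13] = - s :=
  chi_exchange_eq [:: 0; 5; 8; 9; 13] [:: 0; 5; 7; 8; 9; 11; 13] 5 2 isT isT e9.
by [].
Qed.

Lemma no_realization : False.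
Proof.
have [e1 e2 e3 e4 e5] := chi_signs.
have root_neq0 : bracket point [:: 0; 5; 7; 8; 9; 11] != 0.
  by rewrite -sgr_eq0 chi_root_neq0.
have neq0 l : chi l = - chi [:: 0; 5; 7; 8; 9; 11] -> bracket point l != 0.
  by move=> chi_l; rewrite -sgr_eq0 -/(chi l) chi_l oppr_eq0 chi_root_neq0.
have := pluecker_relation.
have := sgr_mul_gt0 (etrans e1 (esym e2)) (neq0 _ e2).
have := sgr_mul_lt0 e3 root_neq0.
have := sgr_mul_gt0 (etrans e4 (esym e5)) (neq0 _ e5).
lra.
Qed.

End Prismatoid2669.

Theorem mainTheorem5 (R : realType) :
  ~ exists p : 'I_14 -> 'rV[R]_5, realizes_Pi p.
Proof. by case=> p [_ _ p_facets]; exact: no_realization p_facets. Qed.
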